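(* Let $n\geq 1$ be an integer and $p$ a prime number. Let $\phi(x)\in \mathbb{Z}[x]$ be a monic polynomial which is irreducible modulo $p$. Let $a_0(x), a_1(x), \dots, a_{n-1}(x)\in \mathbb{Z}[x]$ each have degree less than $\deg \phi(x)$. Let $a_n$ be an integer with $p\nmid a_n$, and let $b_0, b_1, \dots, b_{n-1}$ be integers with $p\mid b_j$ for each $0\leq j\leq n-1$. Then the polynomial $$F(x)= a_{n}\phi(x)^{2n}+\sum_{j=0}^{n-1}b_j a_j(x)\phi(x)^{2j}$$ has no non-constant factor (in $\mathbb{Z}[x]$) of degree less than $\deg \phi(x)$.
   Context: A polynomial in $\mathbb{Z}[x]$ is irreducible modulo a prime $p$ if its reduction modulo $p$ is irreducible in $(\mathbb{Z}/p\mathbb{Z})[x]$. *)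

From HB Require Import structures.
From mathcomp Require Import all_boot all_order all_algebra.
Set Implicit Arguments. Unset Strict Implicit. Unset Printing Implicit Defensive.
Import Order.TTheory GRing.Theory Num.Theory.
Local Open Scope ring_scope.

Definition redp (p : nat) (f : {poly int}) : {poly 'F_p} :=
  map_poly (fun z : int => z%:~R) f.

Definition irreducible_mod (p : nat) (f : {poly int}) : Prop :=
  irreducible_poly (redp p f).

From HB Require Import structures.
From mathcomp Require Import all_boot all_order all_algebra.
From mathcomp Require Import zify.
Set Implicit Arguments. Unset Strict Implicit. Unset Printing Implicit Defensive.

(* Modulo p the sum over j vanishes, so F reduces to a_n phi^(2n) with a_n
   nonzero in F_p; over Z that sum has degree below deg phi^(2n), so a_n is
   also the leading coefficient of F.  Hence the leading coefficient of a
   factor g of F is prime to p, g keeps its degree modulo p, and g divides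
   a_n phi^(2n) modulo p.  If deg g < deg phi, irreducibility of phi mod p
   makes g coprime to phi mod p, so g is constant. *)

Import Order.TTheory GRing.Theory Num.Theory.
Local Open Scope ring_scope.

Section PhiExpansion.

Variables (R : idomainType) (phi : {poly R}).
Hypothesis phi_neq0 : phi != 0.

Lemma leq_size_exp (k m : nat) :
  (k <= m)%N -> (size (phi ^+ k) <= size (phi ^+ m))%N.
Proof.
have sizeX i : size (phi ^+ i) = ((size phi).-1 * i).+1.
  by rewrite -size_exp prednK // size_poly_gt0 expf_neq0.
by move=> le_km; rewrite !sizeX ltnS leq_mul2l le_km orbT.
Qed.

Lemma size_mul_exp_lt (k : nat) (d : {poly R}) :
  (size d < size phi)%N -> (size (d * phi ^+ k)%R < size (phi ^+ k.+1))%N.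
Proof.
move=> small_d; have [-> | d_neq0] := eqVneq d 0.
  by rewrite mul0r size_poly0 size_poly_gt0 expf_neq0.
have phik_gt0 : (0 < size (phi ^+ k))%N by rewrite size_poly_gt0 expf_neq0.
by rewrite exprSr !size_mul ?expf_neq0 //; lia.
Qed.

Lemma size_sum_mul_exp_lt (I : Type) (r : seq I) (P : pred I)
    (d : I -> {poly R}) (e : I -> nat) (m : nat) :
  (forall i, P i -> (size (d i) < size phi)%N /\ (e i < m)%N) ->
  (size (\sum_(i <- r | P i) d i * phi ^+ e i)%R < size (phi ^+ m))%N.
Proof.
move=> small; apply: (big_ind (fun q : {poly R} => size q < size (phi ^+ m))%N).
- by rewrite size_poly0 size_poly_gt0 expf_neq0.
- by move=> q1 q2 lt1 lt2; rewrite (leq_ltn_trans (size_polyD _ _)) // gtn_max lt1.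
move=> i /small [small_d lt_em].
exact: leq_trans (size_mul_exp_lt (e i) small_d) (leq_size_exp lt_em).
Qed.

End PhiExpansion.

Lemma lead_coef_Cmul_monic_exp_addl (R : idomainType) (phi q : {poly R}) (c : R) (m : nat) :
  phi \is monic -> c != 0 -> (size q < size (phi ^+ m))%N ->
  lead_coef (c%:P * phi ^+ m + q) = c.
Proof.
move=> mon_phi c_neq0 small_q.
rewrite lead_coefDl; last by rewrite size_Cmul.
by rewrite lead_coefM lead_coefC (monicP (monic_exp _ mon_phi)) mulr1.
Qed.

Lemma size_dvdp_irredp_exp (F : fieldType) (q g : {poly F}) (c : F) (k : nat) :
  irreducible_poly q -> c != 0 -> (size g < size q)%N ->
  g %| c *: q ^+ k -> size g = 1%N.
Proof.
move=> irr_q c_neq0 small_g; rewrite dvdpZr // => g_dvd.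
have g_neq0 : g != 0.
  by apply: contraTneq g_dvd => ->; rewrite dvd0p expf_neq0 ?irredp_neq0.
have cop_gq : coprimep g q.
  rewrite coprimep_sym irreducible_poly_coprime //.
  by apply: contraTN small_g => /(dvdp_leq g_neq0); rewrite leqNgt.
move: (coprimep_expr k cop_gq); rewrite /coprimep => /eqP <-.
exact/esym/eqp_size/dvdp_gcd_idl.
Qed.

Lemma dvdz_Fp (p : nat) (z : int) : prime p -> (p%:Z %| z)%Z = (z%:~R == 0 :> 'F_p).
Proof. by move=> p_pr; rewrite (dvdz_pcharf (pchar_Fp p_pr)). Qed.

Lemma size_redp (p : nat) (f : {poly int}) :
  prime p -> ~~ (p%:Z %| lead_coef f)%Z -> size (redp p f) = size f.
Proof. by move=> p_pr; rewrite dvdz_Fp // => nd; apply: size_map_poly_id0. Qed.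

Lemma size_factor_redp_irredp_exp (p k : nat) (F g h : {poly int})
    (q : {poly 'F_p}) (c : 'F_p) :
  prime p -> irreducible_poly q -> ~~ (p%:Z %| lead_coef F)%Z ->
  redp p F = c *: q ^+ k -> F = g * h -> (size g < size q)%N ->
  size g = 1%N.
Proof.
move=> p_pr irr_q nd_F red_F def_F small_g.
have c_neq0 : c != 0.
  have F_neq0 : F != 0 by apply: contraNneq nd_F => ->; rewrite lead_coef0 dvdz0.
  move: F_neq0; rewrite -size_poly_eq0 -(size_redp p_pr nd_F) red_F.
  by apply: contraNneq => ->; rewrite scale0r size_poly0.
have nd_g : ~~ (p%:Z %| lead_coef g)%Z.
  by apply: contra nd_F; rewrite def_F lead_coefM => /dvdz_mulr ->.
rewrite -(size_redp p_pr nd_g); apply: (size_dvdp_irredp_exp (k := k) irr_q c_neq0).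
  by rewrite size_redp.
by rewrite -red_F def_F /redp rmorphM dvdp_mulIl.
Qed.

Theorem lemma2p3 (n p : nat) (phi : {poly int}) (a : nat -> {poly int})
  (an : int) (b : nat -> int) :
  (1 <= n)%N -> prime p ->
  phi \is monic -> irreducible_mod p phi ->
  (forall j, (j < n)%N -> (size (a j) < size phi)%N) ->
  ~~ (p%:Z %| an)%Z ->
  (forall j, (j < n)%N -> (p%:Z %| b j)%Z) ->
  ~ exists g h : {poly int},
      [/\ (1 < size g)%N, (size g < size phi)%N &
          an%:P * phi ^+ (2 * n) + \sum_(j < n) (b j)%:P * a j * phi ^+ (2 * j)
          = g * h].
Proof.
move=> _ p_pr mon_phi irr_phi small_a nd_an dvd_b [g [h [big_g small_g def_F]]].
have an_neq0 : an != 0 by apply: contraNneq nd_an => ->; rewrite dvdz0.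
have small_tail :
    (size (\sum_(j < n) (b j)%:P * a j * phi ^+ (2 * j))%R < size (phi ^+ (2 * n)))%N.
  apply: size_sum_mul_exp_lt; first exact: monic_neq0.
  move=> j _; split; last by rewrite ltn_mul2l ltn_ord.
  by rewrite mul_polyC (leq_ltn_trans (size_scale_leq _ _)) ?small_a.
have lead_F := lead_coef_Cmul_monic_exp_addl mon_phi an_neq0 small_tail.
have red_F : redp p (an%:P * phi ^+ (2 * n)
                     + \sum_(j < n) (b j)%:P * a j * phi ^+ (2 * j))
             = an%:~R *: redp p phi ^+ (2 * n).
  rewrite /redp rmorphD rmorph_sum /= big1 ?addr0.
    by rewrite rmorphM rmorphXn /= map_polyC mul_polyC.
  move=> j _; rewrite !rmorphM /= map_polyC /=.
  by move: (dvd_b j (ltn_ord j)); rewrite dvdz_Fp // => /eqP ->; rewrite !mul0r.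
have size_red_phi : size (redp p phi) = size phi.
  by rewrite size_redp // (monicP mon_phi) dvdz_Fp // oner_eq0.
have g1 : size g = 1%N.
  apply: (size_factor_redp_irredp_exp p_pr irr_phi _ red_F def_F).
    by rewrite lead_F.
  by rewrite size_red_phi.
by rewrite g1 in big_g.
Qed.
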